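(* Let $(N_0,c,w,P)$ be an RS-situation and $S\subseteq N$ a nonempty coalition of retailers. Let $P_S=(p_i)_{i\in S}$ be the restriction of $P$ to $S$. Then the RS-game $(S_0,v_{S_0})$ corresponding to the RS-situation $(S_0,c,w,P_S)$ (with retailer set $S$ and supplier $0$) is balanced.
   Context: Let $c\in\mathbb{R}$. An RS-problem is a triple $(c,w,p)$ where $w:\mathbb{R}_+\to(c,+\infty)$ is decreasing (non-increasing) and continuous, and $p:\mathbb{R}_+\to\mathbb{R}$ is decreasing (non-increasing) and continuous, satisfies $p(0)>w(0)$, and there exists $q>0$ with $p(q)=c$. An RS-situation is a tuple $(M_0,c,w,(p_i)_{i\in M})$ where $M$ is a finite nonempty set of retailers, $0$ denotes the supplier, $M_0=M\cup\{0\}$, and $(c,w,p_i)$ is an RS-problem for each $i\in M$; here $N=\{1,\dots,n\}$ and $S_0=S\cup\{0\}$. For $q\ge0$ and $\omega\in\mathbb{R}$, $\Pi_i^{ret}(q;\omega)=(p_i(q)-\omega)q$. For nonempty $T\subseteq M$, $(q_i^T)_{i\in T}$ is a fixed optimal solution of: maximize $\sum_{i\in T}(p_i(q_i)-w(q_T))q_i$ over $q\in\mathbb{R}_+^{T}$ subject to $p_i(q_i)\ge w(q_T)$ for all $i\in T$, where $q_T=\sum_{i\in T}q_i$; $q_T^T=\sum_{i\in T}q_i^T$. For $i\in M$, $q_i^c$ is a fixed optimal solution of: maximize $(p_i(q)-c)q$ over $q\ge0$ subject to $p_i(q)\ge c$. The corresponding RS-game $(M_0,v)$ is the TU game on $M_0$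 with $v(\emptyset)=0$ and, for all $T\subseteq M$, $v(T)=\sum_{i\in T}\Pi_i^{ret}(q_i^T;w(q_T^T))$ and $v(T\cup\{0\})=\sum_{i\in T}\Pi_i^{ret}(q_i^c;c)$. A TU game $(M_0,v)$ is balanced iff its core $\{x\in\mathbb{R}^{M_0}: \sum_{i\in M_0}x_i=v(M_0),\ \sum_{i\in T}x_i\ge v(T)\ \forall T\subset M_0\}$ is nonempty. *)

From HB Require Import structures.
From mathcomp Require Import all_boot all_order all_algebra.
From mathcomp Require Import all_classical all_reals all_analysis.
Set Implicit Arguments. Unset Strict Implicit. Unset Printing Implicit Defensive.
Import Order.TTheory GRing.Theory Num.Theory.
Import numFieldNormedType.Exports.

Local Open Scope ring_scope.

Section RS.
Variable R : realType.

Definition nonincr_on_Rplus (f : R -> R) : Prop :=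
  forall x y : R, 0 <= x -> x <= y -> f y <= f x.

Definition cont_on_Rplus (f : R -> R) : Prop :=
  (let A := [set x : R | 0 <= x]%classic in
   ({within A, continuous f})%classic).

Definition RS_problem (c : R) (w p : R -> R) : Prop :=
  [/\ nonincr_on_Rplus w, cont_on_Rplus w &
      (forall q, 0 <= q -> c < w q)] /\
  [/\ nonincr_on_Rplus p, cont_on_Rplus p,
      w 0 < p 0 &
      exists q, 0 < q /\ p q = c].

Definition RS_situation (I : finType) (c : R) (w : R -> R) (p : I -> R -> R)
  : Prop := (0 < #|I|)%N /\ forall i, RS_problem c w (p i).

Definition Pi_ret (p : R -> R) (q omega : R) : R := (p q - omega) * q.

Definition qtot (I : finType) (T : {set I}) (q : I -> R) : R :=
  \sum_(i in T) q i.

Definition feasT (I : finType) (w : R -> R) (p : I -> R -> R)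
    (T : {set I}) (q : I -> R) : Prop :=
  forall i, i \in T -> 0 <= q i /\ w (qtot T q) <= p i (q i).

Definition objT (I : finType) (w : R -> R) (p : I -> R -> R)
    (T : {set I}) (q : I -> R) : R :=
  \sum_(i in T) (p i (q i) - w (qtot T q)) * q i.

(* q is an optimal solution of the coalition-T problem
   (only the components in T are meaningful) *)
Definition optT (I : finType) (w : R -> R) (p : I -> R -> R)
    (T : {set I}) (q : I -> R) : Prop :=
  feasT w p T q /\ forall q', feasT w p T q' -> objT w p T q' <= objT w p T q.

Definition optc (c : R) (p : R -> R) (q : R) : Prop :=
  (0 <= q /\ c <= p q) /\
  forall q', 0 <= q' -> c <= p q' -> (p q' - c) * q' <= (p q - c) * q.

(* the RS-game; players are option I, None = supplier 0 *)
Definition RS_game (I : finType) (c : R) (w : R -> R) (p : I -> R -> R)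
    (qT : {set I} -> I -> R) (qc : I -> R) (U : {set option I}) : R :=
  let T := [set i | Some i \in U] in
  if None \in U then \sum_(i in T) Pi_ret (p i) (qc i) c
  else \sum_(i in T) Pi_ret (p i) (qT T i) (w (qtot T (qT T))).

(* the TU game with player set A and characteristic function v is balanced:
   its core is nonempty *)
Definition balanced_on (P : finType) (A : {set P}) (v : {set P} -> R) : Prop :=
  exists x : P -> R,
    \sum_(j in A) x j = v A /\
    forall U : {set P}, U \proper A -> v U <= \sum_(j in U) x j.

End RS.

From HB Require Import structures.
From mathcomp Require Import all_boot all_order all_algebra.
From mathcomp Require Import all_classical all_reals all_analysis.
Set Implicit Arguments. Unset Strict Implicit. Unset Printing Implicit Defensive.
Import Order.TTheory GRing.Theory Num.Theory.
Local Open Scope ring_scope.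

(* A core element: the supplier gets nothing and every retailer gets the
   monopoly profit it would make buying at cost price [c].  Coalitions
   containing the supplier trade at [c] and are worth exactly their share.
   Without the supplier a coalition buys at the wholesale price [w > c]; each
   retailer's profit at price [w] is below its profit at price [c] for the
   same quantity, which is feasible for the cost-price problem and hence
   below its optimum. *)

Lemma sum_over_options (V : nmodType) (I : finType) (x : option I -> V)
    (U : {set option I}) :
  x None = 0 ->
  \sum_(j in U) x j = \sum_(i in [set i | Some i \in U]) x (Some i).
Proof.
move=> x0; rewrite (bigID (fun j => j != None)) /=.
rewrite [X in _ + X]big1 ?addr0; last by move=> [j|] //= /andP[].
rewrite -(big_imset _ (h := Some)) /=; last by move=> a b _ _ [].
apply: eq_bigl => -[j|] /=; last by rewrite andbF; apply/esym/imsetP => -[k].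
rewrite andbT; apply/idP/imsetP => [jU|[k]]; first by exists j; rewrite ?inE.
by rewrite inE => kU [->].
Qed.

Lemma Some_preimage_sub (I : finType) (S : {set I}) (U : {set option I}) :
  U \subset None |: (Some @: S) -> [set i | Some i \in U] \subset S.
Proof.
move=> /fintype.subsetP sU; apply/fintype.subsetP => i; rewrite inE => /sU.
by rewrite !inE => /imsetP [k kS [->]].
Qed.

Section RetailerProfit.
Variables (R : realType) (c : R) (p : R -> R).

Lemma Pi_ret_le_lower_price (q omega omega' : R) :
  0 <= q -> omega' <= omega -> Pi_ret p q omega <= Pi_ret p q omega'.
Proof. by move=> q0 le_omega; rewrite ler_wpM2r // lerB. Qed.

Lemma Pi_ret_le_optc (qc q omega : R) :
  optc c p qc -> 0 <= q -> c <= omega -> omega <= p q ->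
  Pi_ret p q omega <= Pi_ret p qc c.
Proof.
move=> [_ qc_opt] q0 c_le_omega omega_le_p.
apply: le_trans (qc_opt q q0 (le_trans c_le_omega omega_le_p)).
exact: Pi_ret_le_lower_price.
Qed.

End RetailerProfit.

Lemma qtot_ge0_feasT (R : realType) (I : finType) (w : R -> R)
    (p : I -> R -> R) (T : {set I}) (q : I -> R) :
  feasT w p T q -> 0 <= qtot T q.
Proof. by move=> feas; apply: sumr_ge0 => i /feas[]. Qed.

Section RSGameCore.
Variables (R : realType) (I : finType) (c : R) (w : R -> R).
Variables (p : I -> R -> R) (qT : {set I} -> I -> R) (qc : I -> R).

Definition cost_price_alloc (j : option I) : R :=
  if j is Some i then Pi_ret (p i) (qc i) c else 0.

Let v := RS_game c w p qT qc.

Lemma sum_cost_price_alloc (U : {set option I}) :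
  \sum_(j in U) cost_price_alloc j =
  \sum_(i in [set i | Some i \in U]) Pi_ret (p i) (qc i) c.
Proof. exact: sum_over_options. Qed.

Lemma RS_game_with_supplier (U : {set option I}) :
  None \in U -> v U = \sum_(j in U) cost_price_alloc j.
Proof. by move=> U0; rewrite sum_cost_price_alloc /v /RS_game U0. Qed.

Lemma RS_game_without_supplier_le (S : {set I}) (U : {set option I}) :
  (forall i, RS_problem c w (p i)) ->
  (forall i, i \in S -> optc c (p i) (qc i)) ->
  [set i | Some i \in U] \subset S ->
  feasT w p [set i | Some i \in U] (qT [set i | Some i \in U]) ->
  None \notin U -> v U <= \sum_(j in U) cost_price_alloc j.
Proof.
move=> Hp Hc /fintype.subsetP sTS feas /negbTE U0.
rewrite sum_cost_price_alloc /v /RS_game U0.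
apply: ler_sum => i iT; have [q0 w_le_p] := feas i iT.
have [[_ _ c_lt_w] _] := Hp i.
apply: Pi_ret_le_optc (Hc i (sTS i iT)) q0 _ w_le_p.
by rewrite ltW ?c_lt_w ?(qtot_ge0_feasT feas).
Qed.

End RSGameCore.

Theorem corollary5p3 (R : realType) (I : finType) (c : R) (w : R -> R)
    (p : I -> R -> R) (S : {set I})
    (qT : {set I} -> I -> R) (qc : I -> R) :
  RS_situation c w p ->
  S != finset.set0 ->
  (forall T : {set I}, T \subset S -> optT w p T (qT T)) ->
  (forall i, i \in S -> optc c (p i) (qc i)) ->
  balanced_on (None |: (Some @: S)) (RS_game c w p qT qc).
Proof.
move=> [_ Hp] _ HT Hc; exists (cost_price_alloc c p qc); split.
  by rewrite RS_game_with_supplier // setU11.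
move=> U /fintype.properP [sU _]; have sTS := Some_preimage_sub sU.
have [U0 | U0] := boolP (None \in U).
  by rewrite RS_game_with_supplier.
exact: RS_game_without_supplier_le Hp Hc sTS (HT _ sTS).1 U0.
Qed.
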